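(* Let $m,n\in\mathbb{P}$ and let $K_n=[n]\oplus([1]\sqcup[1])\oplus[n]$. For the poset $[m]\times K_n$ the following are equivalent: (a) $[m]\times K_n$ has a unique rank level of maximal size; (b) $m=1$ or $m=2n+1$; (c) $\mathcal{N}_{[m]\times K_n}$ is monic; (d) $\mathcal{N}_{[m]\times K_n}$ is palindromic.
   Context: $[k]=\{1<\cdots<k\}$ is a chain; $\oplus$ is the ordinal sum (every element of the first summand is below every element of the second), and $[1]\sqcup[1]$ is a two-element antichain. So $K_n$ consists of a chain $1<\cdots<n$, then two incomparable elements, then a chain of $n$ elements, with everything in a lower part below everything in a higher part. $[m]\times K_n$ has the product order; it is graded (all maximal chains have equal length, rank of minimal element $1$, rank increases by one along covers) and its rank levels are the sets of elements of equal rank. $\mathcal{N}_P(t)=\sum_A t^{|A|}$ over all antichains $A$ (including $\emptyset$). A polynomial $\sum_{k=0}^d a_kt^k$ with $a_d\neq0$ is monic if $a_d=1$ and palindromic if $a_k=a_{d-k}$ for all $k$. *)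

From HB Require Import structures.
From mathcomp Require Import all_boot all_order all_algebra.
Set Implicit Arguments. Unset Strict Implicit. Unset Printing Implicit Defensive.
Import GRing.Theory.
Local Open Scope ring_scope.

Section Posets.
Variables (T : finType) (le : rel T).

Definition plt (x y : T) : bool := le x y && (x != y).

Definition covers (x y : T) : bool :=
  plt x y && [forall z : T, ~~ (plt x z && plt z y)].

Definition minimal (x : T) : bool := [forall y : T, le y x ==> (y == x)].

Definition rank_function (r : T -> nat) : Prop :=
  (forall x, minimal x -> r x = 1%N) /\
  (forall x y, covers x y -> r y = (r x).+1).

Definition rank_level (r : T -> nat) (k : nat) : {set T} :=
  [set x | r x == k].

Definition unique_max_rank_level : Prop :=
  exists r, rank_function r /\
    exists k : nat, forall j : nat, j != k ->
      (#|rank_level r j| < #|rank_level r k|)%N.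

Definition antichain (A : {set T}) : bool :=
  [forall x in A, forall y in A, le x y ==> (x == y)].

Definition antichain_poly : {poly int} :=
  \sum_(A : {set T} | antichain A) 'X^#|A|.

End Posets.

Definition palindromic (p : {poly int}) : Prop :=
  forall k : nat, (k <= (size p).-1)%N -> p`_k = p`_((size p).-1 - k).

Definition chain_le (m : nat) : rel 'I_m := fun i j => (i <= j)%N.

(* K_n = [n] (+) ([1] |_| [1]) (+) [n], on 'I_(2n+2):
   0..n-1 lower chain, n and n+1 the antichain, n+2..2n+1 upper chain.
   Kn_lvl gives the position in the ordinal sum; x <= y iff x = y or
   x is in a strictly lower position. *)
Definition Kn_lvl (n : nat) (x : 'I_(n.*2.+2)) : nat :=
  if (x <= n)%N then val x else (val x).-1.

Definition Kn_le (n : nat) : rel 'I_(n.*2.+2) :=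
  fun x y => (x == y) || (Kn_lvl x < Kn_lvl y)%N.

Definition mKn_le (m n : nat) : rel ('I_m * 'I_(n.*2.+2)) :=
  fun p q => chain_le p.1 q.1 && Kn_le p.2 q.2.
Arguments mKn_le m n : clear implicits.
Arguments Kn_le n : clear implicits.
Arguments Kn_lvl n : clear implicits.
Arguments chain_le m : clear implicits.

(** Antichains of [m] × Q are counted row by row: the top row of an antichain is an
    antichain C of Q, and the rows below form an antichain of [m-1] × (Q minus the
    down-set of C).  For Q = K_n the possible C are the empty set, the singletons and the
    middle pair, and the subsets of K_n that arise are the up-sets {level >= h} and the
    sets {level >= n} with one middle element removed.  By induction on m their antichain
    polynomials are combinations of the grid polynomials sum_k C(L,k) C(m,k) t^k; in
    particular N_{[m] × K_n} = Kpoly (2n+1) m.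

    For m <= 2n+1 this polynomial has degree m+1 and leading coefficient C(2n, m-1), which
    is 1 exactly when m = 1 or m = 2n+1; for larger m the leading coefficient exceeds 1.
    The constant term is 1, so a palindromic N is monic, and for m = 1 and m = 2n+1 the
    coefficients are symmetric.

    The rank of (i, x) is i + lvl x + 1, so the rank levels of [m] × K_n have the sizes of
    the windows of width m over the level profile (1,...,1,2,1,...,1) of K_n; the largest
    window is unique only when m = 1 or when the window covers all of K_n. *)

From mathcomp Require Import all_boot all_order all_algebra zify ring.
Set Implicit Arguments. Unset Strict Implicit. Unset Printing Implicit Defensive.
Import GRing.Theory Num.Theory.

Section ChainProduct.
Variables (Q : finType) (le : rel Q) (M : nat).
Local Notation T := ('I_M * Q)%type.

Definition chain_prod_le : rel T := fun p q => chain_le M p.1 q.1 && le p.2 q.2.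

Definition row_antichain (m : nat) (S : {set Q}) (A : {set T}) : bool :=
  antichain chain_prod_le A && [forall p in A, (p.1 < m) && (p.2 \in S)].

Definition row_apoly (m : nat) (S : {set Q}) : {poly int} :=
  (\sum_(A : {set T} | row_antichain m S A) 'X^#|A|)%R.

Definition downset (C : {set Q}) : {set Q} := [set y | [exists x in C, le y x]].

Lemma antichain0 : antichain le set0.
Proof. by apply/forall_inP => x; rewrite inE. Qed.

Lemma antichain1 x : antichain le [set x].
Proof.
by apply/forall_inP => y /set1P ->; apply/forall_inP => z /set1P ->; rewrite eqxx implybT.
Qed.

Lemma downset0 : downset set0 = set0.
Proof. by apply/setP => y; rewrite !inE; apply/existsP => -[x]; rewrite inE. Qed.

Lemma downset1 x : downset [set x] = [set y | le y x].
Proof.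
apply/setP => y; rewrite !inE; apply/existsP/idP => [[z /andP[/set1P -> //]] | le_yx].
by exists x; rewrite inE eqxx.
Qed.

Lemma downset2 x x' : downset [set x; x'] = [set y | le y x || le y x'].
Proof.
apply/setP => y; rewrite !inE; apply/existsP/orP => [[z /andP[/set2P[] -> le_y]] | [le_y | le_y]].
- by left.
- by right.
- by exists x; rewrite !inE eqxx le_y.
- by exists x'; rewrite !inE eqxx le_y orbT.
Qed.

Lemma row_apoly0 S : row_apoly 0 S = 1%R.
Proof.
rewrite /row_apoly (big_pred1 set0) ?cards0 ?expr0 // => A /=.
apply/idP/eqP => [/andP[_ /forall_inP rowA]|->].
  by apply/setP => p; rewrite inE; apply/negP => /rowA; rewrite ltn0.
by apply/andP; split; apply/forall_inP => p; rewrite inE.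
Qed.

Lemma row_antichain_below k S A : row_antichain k S A -> {in A, forall p : T, p.1 < k}.
Proof. by case/andP=> _ /forall_inP rowsA p /rowsA /andP[]. Qed.

Lemma antichain_poly_row_apoly : antichain_poly chain_prod_le = row_apoly M setT.
Proof.
apply: eq_bigl => A; rewrite /row_antichain.
by case: (antichain _ A) => //=; apply/esym/forall_inP => p _; rewrite ltn_ord inE.
Qed.

Section TopRow.
Variables (m : nat) (lt_m_M : m < M).
Let top : 'I_M := Ordinal lt_m_M.

Definition top_row (C : {set Q}) : {set T} := [set (top, x) | x in C].
Definition top_slice (A : {set T}) : {set Q} := [set x | (top, x) \in A].
Definition below_top (A : {set T}) : {set T} := [set p in A | p.1 < m].

Lemma mem_top_row C (p : T) : (p \in top_row C) = (p.1 == top) && (p.2 \in C).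
Proof.
case: p => i x; apply/imsetP/andP => /= [[y yC [-> ->]] // | [/eqP -> xC]].
by exists x.
Qed.

Lemma top_row_above C (p : T) : p.1 < m -> p \notin top_row C.
Proof. by move=> lt_pm; rewrite mem_top_row; apply/nandP; left; rewrite -val_eqE neq_ltn lt_pm. Qed.

Lemma below_top_below (A : {set T}) : {in below_top A, forall p : T, p.1 < m}.
Proof. by move=> p; rewrite inE => /andP[]. Qed.

Lemma below_top_top_slice (A : {set T}) :
  {in A, forall p : T, p.1 < m.+1} -> below_top A :|: top_row (top_slice A) = A.
Proof.
move=> rowsA; apply/setP => -[i x]; rewrite !inE mem_top_row inE /=.
have [-> | ne_top] := eqVneq i top; first by rewrite ltnn andbF.
rewrite andFb orbF; case iA: ((i, x) \in A) => //=.
have := rowsA _ iA; rewrite ltnS leq_eqVlt => /orP[/eqP i_m | //].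
by case/eqP: ne_top; apply: val_inj.
Qed.

Section AddTopRow.
Variable (A : {set T}).
Hypothesis below_A : {in A, forall p : T, p.1 < m}.

Lemma antichain_top_row C :
  antichain chain_prod_le (A :|: top_row C) =
  [&& antichain chain_prod_le A, antichain le C & [forall p in A, p.2 \notin downset C]].
Proof.
apply/forall_inP/and3P => [acU | [acA acC /forall_inP notdown]].
  have subU q : q \in A -> q \in A :|: top_row C by rewrite inE => ->.
  have rowU x : x \in C -> (top, x) \in A :|: top_row C.
    by rewrite inE mem_top_row eqxx => ->; rewrite orbT.
  split.
  - apply/forall_inP => p pA; apply/forall_inP => q qA.
    by move/forall_inP: (acU p (subU p pA)) => /(_ q (subU q qA)).
  - apply/forall_inP => x xC; apply/forall_inP => y yC; apply/implyP => le_xy.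
    move/forall_inP: (acU _ (rowU x xC)) => /(_ _ (rowU y yC)).
    by rewrite /chain_prod_le /chain_le /= leqnn le_xy => /eqP [->].
  - apply/forall_inP => p pA; apply/negP; rewrite inE => /existsP[x /andP[xC le_px]].
    move/forall_inP: (acU p (subU p pA)) => /(_ _ (rowU x xC)).
    rewrite /chain_prod_le /chain_le /= le_px ltnW ?below_A // => /eqP pE.
    by have := below_A pA; rewrite pE ltnn.
move=> p pU; apply/forall_inP => q qU; apply/implyP => /andP[le1 le2].
rewrite !inE !mem_top_row in pU qU.
case/orP: pU => [pA | /andP[/eqP p1 p2]]; case/orP: qU => [qA | /andP[/eqP q1 q2]].
- by move/forall_inP: acA => /(_ p pA) /forall_inP /(_ q qA); rewrite /chain_prod_le le1 le2.
- by have /negP[] := notdown p pA; rewrite inE; apply/existsP; exists q.2; rewrite q2.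
- by have := leq_ltn_trans le1 (below_A qA); rewrite p1 ltnn.
- move/forall_inP: acC => /(_ _ p2) /forall_inP /(_ _ q2) /implyP /(_ le2) /eqP e.
  by case: p q p1 q1 e {le1 le2 p2 q2} => [? ?] [? ?] /= -> -> ->.
Qed.

Lemma row_antichain_top_row S C :
  row_antichain m.+1 S (A :|: top_row C) =
  [&& C \subset S, antichain le C & row_antichain m (S :\: downset C) A].
Proof.
rewrite /row_antichain antichain_top_row.
have rowsE : [forall p in A :|: top_row C, (p.1 < m.+1) && (p.2 \in S)] =
             (C \subset S) && [forall p in A, p.2 \in S].
  apply/forall_inP/andP => [rows | [/subsetP CS /forall_inP AS] p].
    split.
      apply/subsetP => x xC; move/(_ (top, x)): rows.
      by rewrite inE mem_top_row eqxx xC orbT => /(_ isT) /andP[].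
    by apply/forall_inP => p pA; move/(_ p): rows; rewrite inE pA => /(_ isT) /andP[].
  rewrite inE mem_top_row => /orP[pA | /andP[/eqP -> xC]].
    by rewrite ltnS ltnW ?below_A ?AS.
  by rewrite /= ltnSn CS.
have belowE : [forall p in A, (p.1 < m) && (p.2 \in S :\: downset C)] =
              [forall p in A, p.2 \notin downset C] && [forall p in A, p.2 \in S].
  apply/forall_inP/andP => [below | [/forall_inP notdown /forall_inP AS] p pA].
    by split; apply/forall_inP => p pA; have := below p pA; rewrite inE => /and3P[].
  by rewrite below_A // inE notdown ?AS.
rewrite rowsE belowE.
by case: (antichain _ A) (antichain le C) (C \subset S) => [] [] [] /=; rewrite ?andbF.
Qed.

Lemma top_slice_top_row C : top_slice (A :|: top_row C) = C.
Proof.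
apply/setP => x; rewrite !inE mem_top_row eqxx /=.
case xA: ((top, x) \in A) => //.
by have := below_A xA; rewrite /= ltnn.
Qed.

Lemma below_top_top_row C : below_top (A :|: top_row C) = A.
Proof.
apply/setP => -[i x]; rewrite !inE mem_top_row /=.
case iA: ((i, x) \in A); first by rewrite (below_A iA).
by have [-> | ne_top] := eqVneq i top; rewrite /= ?ltnn ?andbF // (negbTE ne_top).
Qed.

Lemma card_top_row C : #|A :|: top_row C| = #|A| + #|C|.
Proof.
rewrite cardsU card_imset; last by move=> x y [].
suff -> : A :&: top_row C = set0 by rewrite cards0 subn0.
apply/setP => p; rewrite in_set0 in_setI; case pA: (p \in A) => //=.
exact/negbTE/top_row_above/below_A.
Qed.

End AddTopRow.

Lemma row_apolyS S :
  row_apoly m.+1 S =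
  (\sum_(C : {set Q} | (C \subset S) && antichain le C) 'X^#|C| * row_apoly m (S :\: downset C))%R.
Proof.
rewrite /row_apoly (partition_big top_slice (fun C => (C \subset S) && antichain le C)); last first.
  move=> A acA; have /below_top_top_slice decA := row_antichain_below acA.
  move: acA; rewrite -{1}decA (row_antichain_top_row (@below_top_below A)).
  by case/and3P=> -> ->.
apply: eq_bigr => C /andP[CS acC]; rewrite big_distrr /=.
rewrite (reindex_onto (fun A => A :|: top_row C) below_top); last first.
  move=> A /andP[acA /eqP sliceA].
  by rewrite -sliceA below_top_top_slice //; apply: row_antichain_below acA.
have fiberE A : [&& row_antichain m.+1 S (A :|: top_row C),
                   top_slice (A :|: top_row C) == C & below_top (A :|: top_row C) == A] =
                row_antichain m (S :\: downset C) A.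
  apply/and3P/idP => [[acA _ /eqP belowE] | acA].
    have below_A : {in A, forall p : T, p.1 < m} by rewrite -belowE; apply: below_top_below.
    by rewrite row_antichain_top_row // in acA; case/and3P: acA.
  have below_A := row_antichain_below acA.
  by rewrite row_antichain_top_row // CS acC acA top_slice_top_row // below_top_top_row.
apply: eq_big => [A | A]; first by rewrite -andbA fiberE.
rewrite -andbA fiberE => /row_antichain_below below_A.
by rewrite card_top_row // exprD mulrC.
Qed.

End TopRow.
End ChainProduct.

Section Kn.
Variable n : nat.
Local Notation Q := 'I_(n.*2.+2).
Local Notation lvl := (Kn_lvl n).
Local Notation leK := (Kn_le n).

Lemma Kn_lvlE (x : Q) : lvl x = if x <= n then nat_of_ord x else (nat_of_ord x).-1.
Proof. by []. Qed.

Lemma Kn_lvl_lt x : lvl x < n.*2.+1.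
Proof. by rewrite Kn_lvlE; case: (leqP x n) => ?; have := ltn_ord x; lia. Qed.

Lemma Kn_lvl_surj l : l < n.*2.+1 -> exists x : Q, lvl x = l.
Proof.
move=> lt_l; have lt_x : (if l <= n then l else l.+1) < n.*2.+2 by case: (leqP l n) => ?; lia.
exists (Ordinal lt_x); rewrite Kn_lvlE /=.
case: (leqP l n) => [-> // | lt_n_l]; rewrite leqNgt ltnS ltnW //.
Qed.

Lemma Kn_lvl_mid x y : lvl x = lvl y -> x != y -> lvl x = n.
Proof.
move=> + ne_xy; have ne_val : nat_of_ord x != nat_of_ord y := ne_xy.
by rewrite !Kn_lvlE; case: (leqP x n) => ?; case: (leqP y n) => ?; lia.
Qed.

Definition Kn_a : Q := inord n.
Definition Kn_b : Q := inord n.+1.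

Lemma Kn_lvl_a : lvl Kn_a = n.
Proof. by rewrite Kn_lvlE inordK ?leqnn //; lia. Qed.

Lemma Kn_lvl_b : lvl Kn_b = n.
Proof. by rewrite Kn_lvlE inordK ?ltnn //; lia. Qed.

Lemma Kn_a_neq_b : Kn_a != Kn_b.
Proof. by rewrite -val_eqE /= !inordK; lia. Qed.

Lemma Kn_lvl_mid_ab x : lvl x = n -> (x == Kn_a) || (x == Kn_b).
Proof.
move=> lvl_x; have [] : nat_of_ord x = n \/ nat_of_ord x = n.+1.
  by move: lvl_x; rewrite Kn_lvlE; case: leqP => ?; lia.
- move=> val_x; apply/orP; left; apply/eqP/ord_inj.
  by rewrite /Kn_a inordK; [exact: val_x | lia].
- move=> val_x; apply/orP; right; apply/eqP/ord_inj.
  by rewrite /Kn_b inordK; [exact: val_x | lia].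
Qed.

Lemma Kn_lvl_mid_cases x y z :
  lvl x = n -> lvl y = n -> lvl z = n -> x != y -> (z == x) || (z == y).
Proof.
move=> /Kn_lvl_mid_ab x_ab /Kn_lvl_mid_ab y_ab /Kn_lvl_mid_ab z_ab.
by case/orP: x_ab => /eqP->; case/orP: y_ab => /eqP->; case/orP: z_ab => /eqP->;
  rewrite ?eqxx ?orbT.
Qed.

Lemma antichain_Kn_ab : antichain leK [set Kn_a; Kn_b].
Proof.
apply/forall_inP => x x_ab; apply/forall_inP => y y_ab; apply/implyP; rewrite /Kn_le.
have mid z : z \in [set Kn_a; Kn_b] -> lvl z = n by case/set2P => ->; rewrite ?Kn_lvl_a ?Kn_lvl_b.
by rewrite (mid x) // (mid y) // ltnn orbF.
Qed.

Lemma antichain_Kn_card_gt1 C : antichain leK C -> 1 < #|C| -> C = [set Kn_a; Kn_b].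
Proof.
move=> /forall_inP acC /card_gt1P[x [y [xC yC ne_xy]]].
have same_lvl u v : u \in C -> v \in C -> u != v -> lvl u = lvl v.
  move=> uC vC ne_uv; move/forall_inP: (acC u uC) => /(_ v vC).
  move/forall_inP: (acC v vC) => /(_ u uC).
  rewrite /Kn_le (negbTE ne_uv) eq_sym (negbTE ne_uv) /= !implybF -!leqNgt => le_vu le_uv.
  by apply/eqP; rewrite eqn_leq le_uv le_vu.
have lvl_x : lvl x = n := Kn_lvl_mid (same_lvl x y xC yC ne_xy) ne_xy.
have C_gt1 : 1 < #|C| by apply/card_gt1P; exists x, y.
apply/eqP; rewrite eqEcard cards2 Kn_a_neq_b C_gt1 andbT.
apply/subsetP => z zC; rewrite !inE; apply: Kn_lvl_mid_ab.
by have [-> // | ne_zx] := eqVneq z x; rewrite (same_lvl z x).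
Qed.

Lemma sum_Kn_antichains (R : nmodType) (F : {set Q} -> R) (S : {set Q}) :
  (\sum_(C : {set Q} | (C \subset S) && antichain leK C) F C =
   F set0 + \sum_(x in S) F [set x] +
   if (Kn_a \in S) && (Kn_b \in S) then F [set Kn_a; Kn_b] else 0)%R.
Proof.
rewrite (bigD1 set0) /=; last by rewrite sub0set antichain0.
rewrite (bigID (fun C : {set Q} => #|C| == 1)) /= -addrA; congr (_ + (_ + _))%R.
  rewrite -(big_imset _ (h := set1)) /=; last by move=> x y _ _; apply: set1_inj.
  apply: eq_bigl => C; apply/idP/imsetP => [|[x xS ->]].
    by case/andP=> /andP[/andP[CS _] _] /cards1P[x Cx]; exists x; rewrite // -sub1set -Cx.
  rewrite sub1set xS antichain1 cards1 eqxx andbT /=.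
  by apply/eqP => /setP /(_ x); rewrite !inE eqxx.
have big_C (C : {set Q}) :
    (C \subset S) && antichain leK C && (C != set0) && ~~ (#|C| == 1) =
    (C == [set Kn_a; Kn_b]) && (Kn_a \in S) && (Kn_b \in S).
  apply/idP/idP => [/andP[/andP[/andP[CS acC] C0] C1] | /andP[/andP[/eqP -> aS] bS]].
    have CE : C = [set Kn_a; Kn_b].
      by apply: antichain_Kn_card_gt1 acC _; rewrite ltn_neqAle eq_sym C1 lt0n cards_eq0.
    by move: CS; rewrite CE eqxx subUset !sub1set => /andP[-> ->].
  rewrite subUset !sub1set aS bS antichain_Kn_ab cards2 Kn_a_neq_b /= andbT.
  by apply/eqP => /setP /(_ Kn_a); rewrite !inE eqxx.
rewrite (eq_bigl _ _ big_C).
case: ifP => [/andP[aS bS] | ab_S].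
  by rewrite (big_pred1 [set Kn_a; Kn_b]) // => C; rewrite aS bS !andbT.
by rewrite big_pred0 // => C; rewrite -andbA ab_S andbF.
Qed.

Variable M : nat.
Local Notation apoly := (row_apoly (Kn_le n) M).

Lemma row_apoly_KnS m (lt_m_M : m < M) (S : {set Q}) :
  apoly m.+1 S =
  (apoly m S + \sum_(x in S) 'X * apoly m (S :\: [set y | leK y x]) +
   if (Kn_a \in S) && (Kn_b \in S)
   then 'X^2 * apoly m (S :\: [set y | leK y Kn_a || leK y Kn_b]) else 0)%R.
Proof.
rewrite row_apolyS // sum_Kn_antichains cards0 expr0 mul1r downset0 setD0.
congr (_ + _ + _)%R; first by apply: eq_bigr => x _; rewrite cards1 expr1 downset1.
by rewrite cards2 Kn_a_neq_b downset2.
Qed.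

End Kn.

Section GridPolys.
Local Open Scope ring_scope.

Lemma hockey_stick L k : (\sum_(i < L) 'C(i, k) = 'C(L, k.+1))%N.
Proof. by elim: L => [|L IH]; rewrite ?big_ord0 ?bin0n // big_ord_recr /= IH binS. Qed.

Lemma sum_nat_rev (R : nmodType) (F : nat -> R) h N :
  \sum_(h <= l < N) F (N.-1 - l)%N = \sum_(j < N - h) F j.
Proof.
rewrite big_nat_rev -{1}(add0n h) big_addn big_mkord; apply: eq_bigr => j _.
by have lt_j := ltn_ord j; congr F; lia.
Qed.

(* [grid_poly L m] is the antichain polynomial of [L] × [m], and [Kpoly D m] that of
   [m] × ([p] ⊕ ([1] ⊔ [1]) ⊕ [q]) for any p + q + 1 = D. *)
Definition grid_poly (L m : nat) : {poly int} := \poly_(k < L.+1) ('C(L, k) * 'C(m, k))%N%:R.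
Definition sum_grid_poly (L m : nat) : {poly int} := \sum_(j < L) grid_poly j m.
Definition Kpoly (D m : nat) : {poly int} :=
  2%:R * (grid_poly D.+1 m - grid_poly D m) + grid_poly D.-1 m +
  'X * (grid_poly D m - grid_poly D.-1 m).

Lemma coef_grid_poly L m k : (grid_poly L m)`_k = ('C(L, k) * 'C(m, k))%N%:R.
Proof. by rewrite coef_poly; case: ltnP => // lt_L_k; rewrite bin_small. Qed.

Lemma grid_poly0 L : grid_poly L 0 = 1.
Proof. by apply/polyP => -[|k]; rewrite coef_grid_poly coef1 ?bin0 // muln0. Qed.

Lemma sum_grid_polyS L m : sum_grid_poly L.+1 m = sum_grid_poly L m + grid_poly L m.
Proof. by rewrite /sum_grid_poly big_ord_recr. Qed.

Lemma grid_polyS L m : grid_poly L m.+1 = grid_poly L m + 'X * sum_grid_poly L m.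
Proof.
apply/polyP => -[|k]; rewrite coefD coefXM !coef_grid_poly /= ?bin0 ?addr0 //.
rewrite /sum_grid_poly coef_sum.
under eq_bigr do rewrite coef_grid_poly.
by rewrite -natr_sum -natrD -big_distrl /= hockey_stick binS mulnDr addnC.
Qed.

Lemma Kpoly0 D : Kpoly D 0 = 1.
Proof. by rewrite /Kpoly !grid_poly0 !subrr !mulr0 add0r addr0. Qed.

Lemma KpolyS D m :
  Kpoly D.+1 m.+1 =
  Kpoly D.+1 m + 'X * (2%:R * grid_poly D.+1 m + sum_grid_poly D m + 'X * grid_poly D m).
Proof. by rewrite /Kpoly /= !grid_polyS !sum_grid_polyS; ring. Qed.

Section LevelPolys.
Variable n : nat.

(* [Kn_up_poly h m] is the antichain polynomial of [m] × Kn_up h, and [Kn_above_poly l m]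
   that of [m] × (Kn_up h minus the down-set of an element of level l >= h). *)
Definition Kn_up_poly (h m : nat) : {poly int} :=
  if (n < h)%N then grid_poly (n.*2.+1 - h) m else Kpoly (n.*2.+1 - h) m.

Definition Kn_above_poly (l m : nat) : {poly int} :=
  if l == n then grid_poly n.+1 m else Kn_up_poly l.+1 m.

Lemma Kn_up_poly0 h : Kn_up_poly h 0 = 1.
Proof. by rewrite /Kn_up_poly grid_poly0 Kpoly0; case: ifP. Qed.

Lemma sum_Kn_above_poly_high h m : (n < h)%N ->
  \sum_(h <= l < n.*2.+1) Kn_above_poly l m = sum_grid_poly (n.*2.+1 - h) m.
Proof.
move=> lt_n_h; rewrite /sum_grid_poly -(sum_nat_rev (fun j => grid_poly j m)).
apply: eq_big_nat => l /andP[le_h_l lt_l].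
rewrite /Kn_above_poly /Kn_up_poly ifF; last by apply/eqP; lia.
by rewrite ifT; [congr grid_poly|]; lia.
Qed.

Lemma sum_Kn_above_poly_mid m k : (k <= n)%N ->
  \sum_(n - k <= l < n.*2.+1) Kn_above_poly l m =
  2%:R * grid_poly (n + k).+1 m + sum_grid_poly (n + k) m + 'X * grid_poly (n + k) m
  - grid_poly n.+1 m - 'X * grid_poly n m.
Proof.
elim: k => [_ | k IH le_k_n].
  rewrite subn0 addn0 big_ltn; last lia.
  rewrite sum_Kn_above_poly_high // /Kn_above_poly eqxx.
  have -> : (n.*2.+1 - n.+1 = n)%N by lia.
  ring.
rewrite big_ltn; last lia.
have -> : (n - k.+1).+1 = (n - k)%N by lia.
rewrite IH 1?ltnW // /Kn_above_poly ifF; last by apply/eqP; lia.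
rewrite /Kn_up_poly ifF; last lia.
have -> : (n.*2.+1 - (n - k.+1).+1 = (n + k).+1)%N by lia.
by rewrite /Kpoly /= addnS sum_grid_polyS; ring.
Qed.

Lemma Kn_up_poly_lowS h m : (h <= n)%N ->
  Kn_up_poly h m.+1 = Kn_up_poly h m +
    'X * (\sum_(h <= l < n.*2.+1) Kn_above_poly l m + Kn_above_poly n m) +
    'X^2 * Kn_up_poly n.+1 m.
Proof.
move=> le_h_n; rewrite /Kn_above_poly eqxx.
have lowE k : Kn_up_poly h k = Kpoly (n + (n - h)).+1 k.
  by rewrite /Kn_up_poly ifF; [congr Kpoly|]; lia.
have midE k : Kn_up_poly n.+1 k = grid_poly n k.
  by rewrite /Kn_up_poly ltnSn; congr grid_poly; lia.
rewrite !lowE midE -[in \sum_(_ <= _ < _) _](subKn le_h_n) sum_Kn_above_poly_mid ?leq_subr //.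
by rewrite KpolyS; ring.
Qed.

Lemma Kn_up_poly_highS h m : (n < h)%N ->
  Kn_up_poly h m.+1 = Kn_up_poly h m + 'X * \sum_(h <= l < n.*2.+1) Kn_above_poly l m.
Proof. by move=> lt_n_h; rewrite /Kn_up_poly lt_n_h grid_polyS sum_Kn_above_poly_high. Qed.

End LevelPolys.

End GridPolys.

Section KnUpsets.
Variable n : nat.
Local Notation Q := 'I_(n.*2.+2).
Local Notation lvl := (Kn_lvl n).
Local Notation leK := (Kn_le n).

Definition Kn_up (h : nat) : {set Q} := [set x | h <= lvl x].
Definition Kn_up_but (x : Q) : {set Q} := [set y | (y != x) && (n <= lvl y)].

Lemma setD_Kn_below S y :
  lvl y != n -> S :\: [set z | leK z y] = [set z in S | lvl y < lvl z].
Proof.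
move=> lvl_y; apply/setP => z; rewrite !inE /Kn_le negb_or -leqNgt andbC; congr (_ && _).
apply/andP/idP => [[ne_zy] | lt_yz]; last first.
  by split; [apply: contraTneq lt_yz => ->; rewrite ltnn | apply: ltnW].
rewrite leq_eqVlt => /orP[/eqP lvlE | //].
by case/eqP: lvl_y; rewrite lvlE; apply: Kn_lvl_mid (esym lvlE) ne_zy.
Qed.

Lemma Kn_up_remove_low h x :
  x \in Kn_up h -> lvl x != n -> Kn_up h :\: [set z | leK z x] = Kn_up (lvl x).+1.
Proof.
rewrite inE => le_h_x lvl_x; rewrite setD_Kn_below //; apply/setP => z; rewrite !inE.
by apply/andP/idP => [[] // | lt_xz]; rewrite lt_xz (leq_trans le_h_x (ltnW lt_xz)).
Qed.

Lemma Kn_up_remove_mid h x :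
  h <= n -> lvl x = n -> Kn_up h :\: [set z | leK z x] = Kn_up_but x.
Proof.
move=> le_h_n lvl_x; apply/setP => z; rewrite !inE /Kn_le lvl_x negb_or -leqNgt.
by apply/andP/andP => [[/andP[-> ->]] | [-> le_n_z]]; rewrite // (leq_trans le_h_n le_n_z).
Qed.

Lemma Kn_up_remove_ab h :
  h <= n -> Kn_up h :\: [set z | leK z (Kn_a n) || leK z (Kn_b n)] = Kn_up n.+1.
Proof.
move=> le_h_n; apply/setP => z; rewrite !inE /Kn_le Kn_lvl_a Kn_lvl_b !negb_or -leqNgt.
apply/idP/idP => [/andP[/and3P[/andP[ne_za le_n_z] ne_zb _] _] | lt_n_z].
  rewrite ltn_neqAle le_n_z andbT; apply/eqP => lvl_z.
  by have := Kn_lvl_mid_ab (esym lvl_z); rewrite (negbTE ne_za) (negbTE ne_zb).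
rewrite (ltnW lt_n_z) (leq_trans le_h_n (ltnW lt_n_z)) !andbT.
by apply/andP; split; apply: contraTneq lt_n_z => ->; rewrite ?Kn_lvl_a ?Kn_lvl_b ltnn.
Qed.

Lemma Kn_up_but_remove_mid x y : lvl x = n -> y \in Kn_up_but x -> lvl y = n ->
  Kn_up_but x :\: [set z | leK z y] = Kn_up n.+1.
Proof.
rewrite inE => lvl_x /andP[ne_yx _] lvl_y; apply/setP => z.
rewrite !inE /Kn_le lvl_y negb_or -leqNgt.
apply/idP/idP => [/andP[/andP[ne_zy le_n_z] /andP[ne_zx _]] | lt_n_z].
  rewrite ltn_neqAle le_n_z andbT; apply/eqP => lvl_z.
  by have := Kn_lvl_mid_cases lvl_y lvl_x (esym lvl_z) ne_yx; rewrite (negbTE ne_zx) (negbTE ne_zy).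
rewrite (ltnW lt_n_z) !andbT.
by apply/andP; split; apply: contraTneq lt_n_z => ->; rewrite ?lvl_x ?lvl_y ltnn.
Qed.

Lemma Kn_up_but_remove_low x y : lvl x = n -> y \in Kn_up_but x -> lvl y != n ->
  Kn_up_but x :\: [set z | leK z y] = Kn_up (lvl y).+1.
Proof.
move=> lvl_x; rewrite inE => /andP[_ le_n_y] lvl_y; rewrite setD_Kn_below //.
apply/setP => z; rewrite !inE; apply/andP/idP => [[/andP[] //] | lt_yz].
rewrite lt_yz (leq_trans le_n_y (ltnW lt_yz)) andbT; split=> //.
by apply/negP => /eqP zx; move: lt_yz; rewrite zx lvl_x ltnNge le_n_y.
Qed.

Lemma Kn_ab_up h : (Kn_a n \in Kn_up h) && (Kn_b n \in Kn_up h) = (h <= n).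
Proof. by rewrite !inE Kn_lvl_a Kn_lvl_b andbb. Qed.

Lemma Kn_ab_up_but x : lvl x = n -> (Kn_a n \in Kn_up_but x) && (Kn_b n \in Kn_up_but x) = false.
Proof.
move=> /Kn_lvl_mid_ab x_ab; rewrite !inE Kn_lvl_a Kn_lvl_b leqnn !andbT.
by case/orP: x_ab => /eqP ->; rewrite eqxx ?andbF.
Qed.

Local Open Scope ring_scope.

Lemma sum_Kn_lvl (R : nmodType) (G : nat -> R) :
  \sum_(y : Q) G (lvl y) = \sum_(0 <= l < n.*2.+1) G l + G n.
Proof.
under eq_bigr do rewrite Kn_lvlE.
rewrite -(big_mkord xpredT (fun i => G (if (i <= n)%N then i else i.-1))).
rewrite (big_cat_nat (n := n.+1)) //=; last lia.
rewrite big_add1 /= [X in _ + X = _]big_ltn; last lia.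
rewrite [X in _ = X + _](big_cat_nat (n := n.+1)) //=; last lia.
rewrite ltnn addrA [RHS]addrAC; congr (_ + _ + _).
  by apply: eq_big_nat => i /andP[_ le_i_n]; rewrite ifT.
by apply: eq_big_nat => i /andP[lt_n_i _]; rewrite ifF //; lia.
Qed.

Lemma sum_Kn_up (R : nmodType) h (G : nat -> R) :
  \sum_(y in Kn_up h) G (lvl y) = \sum_(h <= l < n.*2.+1) G l + (if (h <= n)%N then G n else 0).
Proof.
rewrite big_mkcond /=.
under eq_bigr do rewrite inE.
rewrite (sum_Kn_lvl (fun l => if (h <= l)%N then G l else 0)) /=.
by rewrite [in RHS]big_geq_mkord [in RHS]big_mkcond big_mkord.
Qed.

Lemma sum_Kn_up_but (R : zmodType) x (G : nat -> R) : lvl x = n ->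
  \sum_(y in Kn_up_but x) G (lvl y) = \sum_(n <= l < n.*2.+1) G l.
Proof.
move=> lvl_x; have := sum_Kn_up n G; rewrite leqnn (bigD1 x) /= ?inE ?lvl_x // => sumE.
apply: (addIr (G n)); rewrite -sumE addrC; congr (_ + _).
by apply: eq_bigl => y; rewrite !inE andbC.
Qed.

End KnUpsets.

Section ClosedForm.
Variables (n M : nat).
Local Notation lvl := (Kn_lvl n).
Local Notation apoly := (row_apoly (Kn_le n) M).
Local Open Scope ring_scope.

Section Step.
Variables (m : nat) (lt_m_M : (m < M)%N).
Hypothesis apoly_up : forall h, apoly m (Kn_up n h) = Kn_up_poly n h m.
Hypothesis apoly_up_but : forall x, lvl x = n -> apoly m (Kn_up_but x) = grid_poly n.+1 m.

Lemma row_apoly_Kn_upS h : apoly m.+1 (Kn_up n h) = Kn_up_poly n h m.+1.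
Proof.
rewrite row_apoly_KnS // Kn_ab_up apoly_up.
rewrite (eq_bigr (fun x => 'X * Kn_above_poly n (lvl x) m)) => [|x x_up]; last first.
  have [lvl_x | lvl_x] := eqVneq (lvl x) n.
    have le_h_n : (h <= n)%N by move: x_up; rewrite inE lvl_x.
    by rewrite Kn_up_remove_mid // apoly_up_but // /Kn_above_poly lvl_x eqxx.
  by rewrite Kn_up_remove_low // apoly_up /Kn_above_poly (negbTE lvl_x).
rewrite -big_distrr /= (sum_Kn_up n h (fun l => Kn_above_poly n l m)).
have [le_h_n | lt_n_h] := leqP h n; last by rewrite Kn_up_poly_highS // !addr0.
by rewrite Kn_up_remove_ab // apoly_up Kn_up_poly_lowS.
Qed.

Lemma row_apoly_Kn_up_butS x : lvl x = n -> apoly m.+1 (Kn_up_but x) = grid_poly n.+1 m.+1.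
Proof.
move=> lvl_x; rewrite row_apoly_KnS // Kn_ab_up_but // addr0 apoly_up_but //.
rewrite (eq_bigr (fun y => 'X * Kn_up_poly n (lvl y).+1 m)) => [|y y_up]; last first.
  have [lvl_y | lvl_y] := eqVneq (lvl y) n.
    by rewrite Kn_up_but_remove_mid // apoly_up lvl_y.
  by rewrite Kn_up_but_remove_low // apoly_up.
rewrite -big_distrr /= (sum_Kn_up_but (fun l => Kn_up_poly n l.+1 m) lvl_x) big_ltn; last lia.
rewrite (eq_big_nat _ _ (F2 := fun l => Kn_above_poly n l m)) => [|l /andP[lt_n_l _]]; last first.
  by rewrite /Kn_above_poly ifF //; apply/eqP; lia.
rewrite sum_Kn_above_poly_high // grid_polyS sum_grid_polyS /Kn_up_poly ltnSn.
have -> : (n.*2.+1 - n.+1 = n)%N by lia.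
by rewrite [grid_poly n m + _]addrC.
Qed.

End Step.

Lemma row_apoly_Kn_up m : (m <= M)%N ->
  (forall h, apoly m (Kn_up n h) = Kn_up_poly n h m) /\
  (forall x, lvl x = n -> apoly m (Kn_up_but x) = grid_poly n.+1 m).
Proof.
elim: m => [_ | m IH lt_m_M].
  by split=> *; rewrite row_apoly0 ?Kn_up_poly0 ?grid_poly0.
have [apoly_up apoly_up_but] := IH (ltnW lt_m_M).
by split; [apply: row_apoly_Kn_upS | apply: row_apoly_Kn_up_butS].
Qed.

End ClosedForm.

Lemma antichain_poly_mKn m n : antichain_poly (mKn_le m n) = Kpoly n.*2.+1 m.
Proof.
have [apoly_up _] := row_apoly_Kn_up n (leqnn m).
rewrite (antichain_poly_row_apoly (Kn_le n) m).
have -> : [set: 'I_(n.*2.+2)] = Kn_up n 0 by apply/setP => x; rewrite !inE.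
by rewrite apoly_up /Kn_up_poly ltn0 subn0.
Qed.

Section KpolyCoefficients.
Local Open Scope ring_scope.

Lemma size_poly_last (R : nzRingType) (p : {poly R}) d :
  p`_d != 0 -> (forall k, (d < k)%N -> p`_k = 0) -> size p = d.+1.
Proof.
move=> nz_d zero_above; apply/eqP; rewrite eqn_leq; apply/andP; split.
  by apply/leq_sizeP => k /zero_above.
by rewrite ltnNge; apply: contra nz_d => /leq_sizeP /(_ d (leqnn d)) ->.
Qed.

Lemma coef_Kpoly D m k : (Kpoly D m)`_k =
  (('C(D.+1, k) * 'C(m, k))%N%:R - ('C(D, k) * 'C(m, k))%N%:R) *+ 2 +
  ('C(D.-1, k) * 'C(m, k))%N%:R +
  (if k is k'.+1 then ('C(D, k') * 'C(m, k'))%N%:R - ('C(D.-1, k') * 'C(m, k'))%N%:R else 0).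
Proof.
rewrite /Kpoly mulr_natl !coefD !coefN coefXM coefB !coef_grid_poly mulr2n.
by case: k => [|k] /=; ring.
Qed.

Lemma coef0_Kpoly D m : (Kpoly D m)`_0 = 1.
Proof. by rewrite coef_Kpoly !bin0 !muln1 subrr mul0rn add0r. Qed.

Section KpolyDegree.
Variables (D m : nat).

Lemma coef_Kpoly_gt_m k : (m.+1 < k)%N -> (Kpoly D.+1 m)`_k = 0.
Proof.
move=> lt_m_k; rewrite coef_Kpoly; case: k lt_m_k => [//|k] lt_m_k.
by rewrite !(bin_small (n := m)) ?muln0 ?subrr ?mul0rn ?addr0 //; lia.
Qed.

Lemma coef_Kpoly_mS : (0 < m)%N -> (m <= D.+1)%N -> (Kpoly D.+1 m)`_m.+1 = 'C(D, m.-1)%:R.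
Proof.
move=> m_gt0 le_m_D; rewrite coef_Kpoly (bin_small (ltnSn m)) !muln0 subrr /=.
rewrite ?mul0rn add0r binn !muln1.
by case: m m_gt0 le_m_D => [//|m'] _ _ /=; rewrite binS natrD; ring.
Qed.

Lemma coef_Kpoly_gt_D k : (D.+2 <= m)%N -> (D.+2 < k)%N -> (Kpoly D.+1 m)`_k = 0.
Proof.
move=> le_D_m lt_D_k; rewrite coef_Kpoly; case: k lt_D_k => [//|k] lt_D_k /=.
by rewrite !(bin_small (n := D.+2)) ?(bin_small (n := D.+1)) ?(bin_small (n := D)) //; lia.
Qed.

Lemma coef_Kpoly_DS : (D.+2 <= m)%N ->
  (Kpoly D.+1 m)`_D.+2 = (2 * 'C(m, D.+2) + 'C(m, D.+1))%N%:R.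
Proof.
move=> le_D_m; rewrite coef_Kpoly /= !binn (bin_small (ltnSn D.+1)).
rewrite (bin_small (ltnW (ltnSn D.+1))) (bin_small (ltnSn D)) !mul0n !mul1n.
by rewrite !subr0 natrD natrM; ring.
Qed.

Lemma size_Kpoly_le : (0 < m)%N -> (m <= D.+1)%N -> size (Kpoly D.+1 m) = m.+2.
Proof.
move=> m_gt0 le_m_D; apply: size_poly_last => [|k]; last exact: coef_Kpoly_gt_m.
by rewrite coef_Kpoly_mS // pnatr_eq0 -lt0n bin_gt0; lia.
Qed.

Lemma size_Kpoly_gt : (D.+2 <= m)%N -> size (Kpoly D.+1 m) = D.+3.
Proof.
move=> le_D_m; apply: size_poly_last => [|k]; last exact: coef_Kpoly_gt_D.
by rewrite coef_Kpoly_DS // pnatr_eq0; have := bin_gt0 m D.+1; lia.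
Qed.

End KpolyDegree.

(* Binomial coefficients with an integer lower index, 0 below 0: they give the coefficients
   of Kpoly N.+1 N.+1 one uniform formula, whose symmetry k <-> N+2-k is binz_sub. *)
Definition binz (L : nat) (z : int) : nat := if z < 0 then 0%N else 'C(L, `|z|%N).

Lemma binz_neg L z : z < 0 -> binz L z = 0%N.
Proof. by rewrite /binz => ->. Qed.

Lemma binz_nat L (k : nat) : binz L k%:Z = 'C(L, k).
Proof. by []. Qed.

Lemma binz_sub L z : binz L (L%:Z - z) = binz L z.
Proof.
rewrite /binz; case: ifP => Lz_lt0; case: ifP => z_lt0 //; try by rewrite bin_small //; lia.
have -> : (`|L%:Z - z| = L - `|z|)%N by lia.
by rewrite bin_sub //; lia.
Qed.

Lemma coef_Kpoly_diag N k : (Kpoly N.+1 N.+1)`_k =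
  (2 * binz N.+1 (k%:Z - 1) * binz N.+1 k%:Z + binz N k%:Z * binz N.+1 k%:Z
   + binz N (k%:Z - 2) * binz N.+1 (k%:Z - 1))%N%:R.
Proof.
rewrite coef_Kpoly !binz_nat; case: k => [|[|k]].
- by rewrite !binz_neg //= !bin0 !muln0 !muln1 !add0n subrr mul0rn add0r addr0.
- rewrite [_ - 1]/= binz_nat !(binz_neg N) //= bin0 !muln1 addn0 !bin1 bin0; nia.
- have -> : (k.+2)%:Z - 1 = (k.+1)%:Z by lia.
  have -> : (k.+2)%:Z - 2 = k%:Z by lia.
  by rewrite !binz_nat /= (binS N.+1 k.+1) (binS N k) !natrD !natrM; ring.
Qed.

Lemma Kpoly_diag_sym N k : (k <= N.+2)%N ->
  (Kpoly N.+1 N.+1)`_k = (Kpoly N.+1 N.+1)`_(N.+2 - k).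
Proof.
move=> le_k_N; rewrite !coef_Kpoly_diag.
have -> : ((N.+2 - k)%N)%:Z - 1 = N.+1%:Z - k%:Z by lia.
have -> : ((N.+2 - k)%N)%:Z = N.+1%:Z - (k%:Z - 1) by lia.
have -> : (N.+1%:Z - (k%:Z - 1)) - 2 = N%:Z - k%:Z by lia.
rewrite !binz_sub.
have -> : N.+1%:Z - (k%:Z - 1) = N%:Z - (k%:Z - 2) by lia.
by rewrite !binz_sub; congr (_%:R); ring.
Qed.

Lemma bin_eq1 N j : (j <= N)%N -> ('C(N, j) == 1)%N = (j == 0)%N || (j == N).
Proof.
move=> le_j_N; have [-> | j_gt0] := posnP j; first by rewrite bin0.
have [-> | ne_jN] := eqVneq j N; first by rewrite binn orbT.
case: N le_j_N ne_jN => [|N]; first lia.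
case: j j_gt0 => [//|j] _ le_j_N ne_jN.
have := bin_gt0 N j.+1; have := bin_gt0 N j; rewrite binS /=; lia.
Qed.

Lemma Kpoly_monic_iff D m : (0 < m)%N ->
  Kpoly D.+1 m \is monic <-> m = 1%N \/ m = D.+1.
Proof.
move=> m_gt0; rewrite monicE lead_coefE.
have [le_m_D | lt_D_m] := leqP m D.+1.
  rewrite size_Kpoly_le // coef_Kpoly_mS // pnatr_eq1 bin_eq1; last lia.
  by split; [case/orP => /eqP; lia | case=> ->; rewrite ?eqxx ?orbT].
rewrite size_Kpoly_gt // coef_Kpoly_DS // pnatr_eq1.
by split; [have := bin_gt0 m D.+1; have := bin_gt0 m D.+2; lia | lia].
Qed.

Lemma Kpoly_palindromic_iff D m : (0 < m)%N ->
  palindromic (Kpoly D.+1 m) <-> m = 1%N \/ m = D.+1.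
Proof.
move=> m_gt0; split=> [pal | [->|->]].
- apply/Kpoly_monic_iff => //; rewrite monicE lead_coefE.
  by have := pal 0%N (leq0n _); rewrite subn0 => <-; rewrite coef0_Kpoly.
- rewrite /palindromic size_Kpoly_le // => -[|[|[|k]]] //= _.
    by rewrite subn0 coef0_Kpoly coef_Kpoly_mS // bin0.
  by rewrite subnn coef0_Kpoly coef_Kpoly_mS // bin0.
- by rewrite /palindromic (@size_Kpoly_le D D.+1) //= => k; apply: Kpoly_diag_sym.
Qed.

End KpolyCoefficients.

Lemma card_ord_ltn N c : #|[set x : 'I_N | x < c]| = minn c N.
Proof.
rewrite -sum1_card (eq_bigl (fun x : 'I_N => x < c)) => [|x]; last by rewrite inE.
rewrite -(big_mkord (fun i => i < c) (fun _ => 1)).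
elim: N => [|N IH]; first by rewrite big_geq //; lia.
by rewrite big_mkcond big_nat_recr //= -big_mkcond IH; case: ltnP; lia.
Qed.

Section Ranks.
Variables (m n : nat).
Local Notation Q := 'I_(n.*2.+2).
Local Notation T := ('I_m * 'I_(n.*2.+2))%type.
Local Notation le := (mKn_le m n).
Local Notation lvl := (Kn_lvl n).

Definition mKn_rank (p : T) : nat := (p.1 + lvl p.2).+1.

Lemma mKn_leE (x y : T) : le x y = (x.1 <= y.1) && ((x.2 == y.2) || (lvl x.2 < lvl y.2)).
Proof. by []. Qed.

Lemma pair_neqE (x y : T) : (x != y) = (x.1 != y.1) || (x.2 != y.2).
Proof. by case: x y => [i a] [j b]; rewrite xpair_eqE negb_and. Qed.

Lemma mKn_rank_lt x y : le x y -> x != y -> mKn_rank x < mKn_rank y.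
Proof.
rewrite mKn_leE pair_neqE /mKn_rank ltnS => /andP[le1 /orP[/eqP eq2 | lt2]]; last lia.
by rewrite eq2 eqxx orbF -val_eqE /=; lia.
Qed.

Lemma covers_mKn_rank x y :
  le x y -> x != y -> mKn_rank y = (mKn_rank x).+1 -> covers le x y.
Proof.
move=> le_xy ne_xy rank_y; rewrite /covers /plt le_xy ne_xy /=.
apply/forallP => z; apply/negP => /andP[/andP[le_xz ne_xz] /andP[le_zy ne_zy]].
by have := mKn_rank_lt le_xz ne_xz; have := mKn_rank_lt le_zy ne_zy; lia.
Qed.

Lemma mKn_lower_cover (x : T) :
  0 < x.1 + lvl x.2 -> exists y, covers le y x /\ mKn_rank x = (mKn_rank y).+1.
Proof.
move=> x_gt0; suff [y [le_yx ne_yx rank_x]] :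
    exists y, [/\ le y x, y != x & mKn_rank x = (mKn_rank y).+1].
  by exists y; split=> //; apply: covers_mKn_rank.
have [x1_0 | x1_gt0] := posnP x.1.
- have [w lvl_w] : exists w : Q, lvl w = (lvl x.2).-1.
    by apply: Kn_lvl_surj; have := Kn_lvl_lt x.2; lia.
  exists (x.1, w); rewrite mKn_leE pair_neqE /mKn_rank /= leqnn eqxx lvl_w /=.
  split; [apply/orP; right; lia | apply/eqP => wE | lia].
  by move: lvl_w; rewrite wE; lia.
- have lt_x1 : x.1.-1 < m by have := ltn_ord x.1; lia.
  exists (Ordinal lt_x1, x.2); rewrite mKn_leE pair_neqE /mKn_rank /= eqxx; split; try lia.
  by rewrite -val_eqE /=; lia.
Qed.

Lemma mKn_rank_minimal x : minimal le x = (mKn_rank x == 1).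
Proof.
apply/forallP/eqP => [min_x | rank_x y]; last first.
  apply/implyP => le_yx; apply: contraT => ne_yx.
  by have := mKn_rank_lt le_yx ne_yx; rewrite rank_x.
apply: contraTeq isT => rank_x; have [|y [/andP[/andP[le_yx ne_yx] _] _]] := @mKn_lower_cover x.
  by move: rank_x; rewrite /mKn_rank; lia.
by have := min_x y; rewrite le_yx (negbTE ne_yx).
Qed.

Lemma mKn_between x y : le x y -> x != y -> (mKn_rank x).+1 < mKn_rank y ->
  exists z, [/\ le x z, z != x, le z y & z != y].
Proof.
case: x y => [i a] [j b]; rewrite mKn_leE pair_neqE /mKn_rank /=.
have [<- | ne_ab] := eqVneq a b => /andP[le_ij le_ab] ne gap.
  rewrite /= orbF in ne.
  have lt_ij : i < j by rewrite ltn_neqAle le_ij andbT; exact: ne.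
  have lt_i1 : i.+1 < m by have := ltn_ord j; lia.
  exists (Ordinal lt_i1, a); rewrite !mKn_leE !pair_neqE /= eqxx /= !orbF.
  by split; [lia | | lia |]; apply/negP => /eqP/(congr1 val) /=; lia.
rewrite /= in le_ab.
have [lt_ij | ge_ij] := ltnP i j.
  exists (i, b); split.
  - by rewrite mKn_leE /= leqnn le_ab orbT.
  - by rewrite pair_neqE (eq_sym b) ne_ab orbT.
  - by rewrite mKn_leE /= le_ij eqxx.
  - by rewrite pair_neqE; apply/orP; left; apply/eqP => /(congr1 val) /=; lia.
have eq_ij : i = j by apply: ord_inj; lia.
have [w lvl_w] : exists w : Q, lvl w = (lvl a).+1 by apply: Kn_lvl_surj; have := Kn_lvl_lt b; lia.
exists (i, w); rewrite !mKn_leE !pair_neqE /= -eq_ij leqnn lvl_w ltnSn !orbT /=.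
split=> //; apply/orP; right.
- by apply/eqP => wE; move: lvl_w; rewrite wE; lia.
- by move: gap; rewrite eq_ij; lia.
- by apply/eqP => wE; move: lvl_w gap; rewrite wE eq_ij; lia.
Qed.

Lemma mKn_rank_covers x y : covers le x y -> mKn_rank y = (mKn_rank x).+1.
Proof.
case/andP=> /andP[le_xy ne_xy] /forallP no_between; apply/eqP; apply: contraT => gap.
have [z [le_xz ne_zx le_zy ne_zy]] := mKn_between le_xy ne_xy
  ltac:(by have := mKn_rank_lt le_xy ne_xy; move: gap; lia).
by have := no_between z; rewrite /plt le_xz le_zy eq_sym ne_zx ne_zy.
Qed.

Lemma rank_function_mKn_rank : rank_function le mKn_rank.
Proof. by split=> [x | x y]; [rewrite mKn_rank_minimal => /eqP | apply: mKn_rank_covers]. Qed.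

Lemma rank_function_mKn_unique r : rank_function le r -> r =1 mKn_rank.
Proof.
case=> r_min r_covers x; move: {-1}(mKn_rank x).-1 (erefl (mKn_rank x).-1) => s.
elim: s x => [|s IH] x rank_x.
  have rank1 : mKn_rank x = 1 by move: rank_x; rewrite /mKn_rank /= => ->.
  by rewrite r_min ?mKn_rank_minimal rank1.
have [|y [cover_yx rank_xy]] := @mKn_lower_cover x.
  by move: rank_x; rewrite /mKn_rank /= => ->.
rewrite (r_covers _ _ cover_yx) IH; first exact: esym rank_xy.
by move: rank_x rank_xy; lia.
Qed.

Definition Kn_lvl_count (t : nat) : nat := minn (if t < n then t.+1 else t.+2) n.*2.+2.

Definition mKn_level_size (s : nat) : nat :=
  if s < m then Kn_lvl_count s else Kn_lvl_count s - Kn_lvl_count (s - m).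

Lemma card_Kn_lvl_le t : #|[set x : Q | lvl x <= t]| = Kn_lvl_count t.
Proof.
rewrite /Kn_lvl_count -card_ord_ltn; apply: eq_card => x; rewrite !inE Kn_lvlE.
by case: (leqP x n) => ?; case: (ltnP t n) => ?; lia.
Qed.

Lemma card_Kn_lvl_window s : #|[set x : Q | lvl x <= s < lvl x + m]| = mKn_level_size s.
Proof.
rewrite /mKn_level_size; case: ltnP => [lt_s_m | le_m_s].
  rewrite -card_Kn_lvl_le; apply: eq_card => x; rewrite !inE.
  by case: (lvl x <= s) => //=; lia.
have -> : [set x : Q | lvl x <= s < lvl x + m] =
          [set x : Q | lvl x <= s] :\: [set x : Q | lvl x <= s - m].
  by apply/setP => x; rewrite !inE; case: (leqP (lvl x) (s - m)) => ? /=; lia.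
rewrite cardsD -!card_Kn_lvl_le; congr (_ - _); apply: eq_card => x.
by rewrite !inE; case: (leqP (lvl x) (s - m)) => ? /=; lia.
Qed.

Lemma card_mKn_rank_level k :
  #|rank_level mKn_rank k| = if k is s.+1 then mKn_level_size s else 0.
Proof.
case: k => [|s]; first by apply/eqP; rewrite cards_eq0; apply/eqP/setP => p; rewrite !inE.
rewrite -card_Kn_lvl_window -(card_in_imset (f := snd)); last first.
  move=> [i x] [j y]; rewrite !inE /mKn_rank /= => /eqP rank_ix /eqP rank_jy xy; subst y.
  by congr pair; apply: ord_inj; lia.
apply: eq_card => x; rewrite inE; apply/imsetP/idP => [[[i y]] | /andP[le_x_s lt_s_x]].
  by rewrite inE /mKn_rank /= => /eqP rank_iy ->; have := ltn_ord i; lia.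
have lt_i : s - lvl x < m by lia.
by exists (Ordinal lt_i, x); rewrite // inE /mKn_rank /=; apply/eqP; lia.
Qed.

End Ranks.

Section LevelSizes.
Variables (m n : nat).
Local Notation size := (mKn_level_size m n).

Lemma mKn_level_size_max_m1 : m = 1 -> forall s, s != n -> size s < size n.
Proof.
move=> m1 s /eqP ne_sn; rewrite /mKn_level_size /Kn_lvl_count m1.
by repeat case: ifP => ?; lia.
Qed.

Lemma mKn_level_size_max_full : m = n.*2.+1 -> forall s, s != n.*2 -> size s < size n.*2.
Proof.
move=> mE s /eqP ne_s; rewrite /mKn_level_size /Kn_lvl_count mE.
by repeat case: ifP => ?; lia.
Qed.

Lemma mKn_level_size_tie : m != 1 -> m != n.*2.+1 ->
  exists s1 s2, [/\ s1 != s2, size s1 = size s2 & forall s, size s <= size s1].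
Proof.
move=> /eqP m_ne1 /eqP m_ne_full.
have [le_m_2n | lt_2n_m] := leqP m n.*2;
  [exists (maxn m.-1 n), (maxn m.-1 n).+1 | exists n.*2, n.*2.+1];
  (split; [by rewrite neq_ltn ltnSn | | move=> s]);
  rewrite /mKn_level_size /Kn_lvl_count; repeat case: ifP => ?; lia.
Qed.

Lemma mKn_level_size_unique_max :
  (exists k, forall s, s != k -> size s < size k) <-> m = 1 \/ m = n.*2.+1.
Proof.
split=> [[k max_k] | [m1 | mE]]; last 2 first.
- by exists n; apply: mKn_level_size_max_m1.
- by exists n.*2; apply: mKn_level_size_max_full.
have [m1 | m_ne1] := eqVneq m 1; first by left.
have [mE | m_ne_full] := eqVneq m n.*2.+1; first by right.
have [s1 [s2 [ne12 eq12 max_s1]]] := mKn_level_size_tie m_ne1 m_ne_full.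
have [k_s1 | /max_k] := eqVneq s1 k; last by have := max_s1 k; lia.
by move: (max_k s2); rewrite -k_s1 eq_sym ne12 eq12 ltnn => /(_ isT).
Qed.

End LevelSizes.

Lemma unique_max_rank_level_mKn m n :
  unique_max_rank_level (mKn_le m n) <-> m = 1 \/ m = n.*2.+1.
Proof.
rewrite -mKn_level_size_unique_max.
split=> [[r [r_rank [k max_k]]] | [k max_k]].
  have levelE j : #|rank_level r j| = #|rank_level (@mKn_rank m n) j|.
    by apply: eq_card => p; rewrite !inE (rank_function_mKn_unique r_rank).
  case: k max_k => [|k] max_k; first by have := max_k 1 isT; rewrite !levelE !card_mKn_rank_level.
  exists k => s ne_sk; have := max_k s.+1; rewrite !levelE !card_mKn_rank_level eqSS.
  exact.
exists (@mKn_rank m n); split; first exact: rank_function_mKn_rank.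
exists k.+1 => -[|s]; rewrite !card_mKn_rank_level ?eqSS => ne_sk; last exact: max_k.
by have := max_k k.+1; rewrite neq_ltn ltnSn orbT; lia.
Qed.

Theorem theorem7p2 (m n : nat) (hm : (0 < m)%N) (hn : (0 < n)%N) :
  let P := mKn_le m n in
  (unique_max_rank_level P <-> (m = 1%N \/ m = n.*2.+1)) /\
  ((m = 1%N \/ m = n.*2.+1) <-> antichain_poly P \is monic) /\
  ((m = 1%N \/ m = n.*2.+1) <-> palindromic (antichain_poly P)).
Proof.
move=> P; rewrite /P antichain_poly_mKn.
split; first exact: unique_max_rank_level_mKn.
by split; apply: iff_sym; [apply: Kpoly_monic_iff | apply: Kpoly_palindromic_iff].
Qed.
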